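(* Let $X_1,\dots,X_d$ be discrete random variables, $X_j\in\{0,\dots,r_j\}$, fix $M\subseteq\{1,\dots,d\}$, and suppose the variables $(X_j)_{j\in M}$ are completely independent with strictly positive joint probability vector $\pi=p(M)$. Let $\mathcal V=\bigcup_k\mathcal P(N_k)$ for a family of subsets $N_k\subsetneq M$, let $a,b\subseteq M$ be disjoint and nonempty and $\mathcal A=\{t\subseteq M: t\cap a\neq\emptyset,\ t\cap b\ne\emptyset\}$. Let $\mathcal I\subseteq\mathcal V\cap\mathcal A$, $\mathcal R=\mathcal V\setminus\mathcal I$, and let $\mathcal H\subseteq\mathcal P(M)\setminus\mathcal V$, and let $Q_{\mathcal I\mathcal H\mid\mathcal R}=F_{\mathcal I\mathcal H}-F_{\mathcal I\mathcal R}F_{\mathcal R\mathcal R}^{-1}F_{\mathcal R\mathcal H}$. Then (i) if $\mathcal H$ contains an interaction $v\notin\mathcal A$, the columns of $Q_{\mathcal I\mathcal H\mid\mathcal R}$ corresponding to $v$ are null; (ii) if $\mathcal H$ contains an interaction $v$ such that at least one variable $j\in v$ is not binary ($r_j\ge 2$) and is not contained in any element of $\mathcal V$, then $Q_{\mathcal I\mathcal H\mid\mathcal R}$ has a block of columns which is not of full rank.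
   Context: $\mathcal P(N)$ denotes the set of nonempty subsets of $N$. For $\emptyset\ne I\subseteq M$, $G(I,M)=\bigotimes_{j\in M}G_j$ where $G_j$ is the identity of order $r_j+1$ with its first column removed if $j\in I$ and $G_j=\mathbf 1_{r_j+1}$ otherwise (cells in lexicographic order). For a collection $\mathcal X\subseteq\mathcal P(M)$, $G_{\mathcal X}$ is the matrix with blocks of columns $G(I,M)$, $I\in\mathcal X$; $\Omega=\mathrm{diag}(\pi)-\pi\pi'$ and $F_{\mathcal X\mathcal Y}=G_{\mathcal X}'\Omega G_{\mathcal Y}$. The columns of $Q$ corresponding to $v\in\mathcal H$ are those coming from the block $G(v,M)$. Complete independence means $\pi(x)=\prod_{j\in M}\pi_j(x_j)$. *)

From HB Require Import structures.
From mathcomp Require Import all_boot all_order all_algebra.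
Set Implicit Arguments. Unset Strict Implicit. Unset Printing Implicit Defensive.
Import Order.TTheory GRing.Theory Num.Theory.
Local Open Scope ring_scope.

Definition lev (d : nat) (r : 'I_d -> nat) := {dffun forall j : 'I_d, 'I_(r j).+1}.

Definition supp d (r : 'I_d -> nat) (x : lev r) : {set 'I_d} :=
  [set j | (nat_of_ord (x j) != 0)%N].

(* cells of the contingency table of (X_j)_{j in M}: level vectors that are
   0 outside M (canonically identified with prod_{j in M} {0..r_j}). *)
Definition cells d (r : 'I_d -> nat) (M : {set 'I_d}) : {set lev r} :=
  [set x : lev r | supp x \subset M].

(* columns of G(I,M): level vectors c with c_j in {1..r_j} for j in I and
   c_j = 0 outside I, i.e. supp c = I.  The columns of G_X are those c
   with supp c in X (the blocks for distinct I are disjoint). *)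
Definition cols d (r : 'I_d -> nat) (X : {set {set 'I_d}}) : {set lev r} :=
  [set c : lev r | supp c \in X].

(* G_X : rows = cells, columns = cols X; the entry of G(I,M) at cell x and
   column c (supp c = I) is prod_{j in I} [x_j = c_j] (Kronecker product of
   identity-without-first-column for j in I and all-ones vectors else). *)
Definition Gmx {R : nzRingType} d (r : 'I_d -> nat) (M : {set 'I_d})
    (X : {set {set 'I_d}}) : 'M[R]_(#|cells r M|, #|cols r X|) :=
  \matrix_(s, k) \prod_(j in supp (enum_val k))
                    ((enum_val s : lev r) j == (enum_val k : lev r) j)%:R.

Definition Omega (R : nzRingType) d (r : 'I_d -> nat) (M : {set 'I_d})
    (pi : lev r -> R) : 'M[R]_#|cells r M| :=
  \matrix_(s, t) ((s == t)%:R * pi (enum_val s) - pi (enum_val s) * pi (enum_val t)).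

Arguments Omega {R d} r M pi.
Definition Fmx (R : nzRingType) d (r : 'I_d -> nat) (M : {set 'I_d}) (pi : lev r -> R)
    (X Y : {set {set 'I_d}}) : 'M[R]_(#|cols r X|, #|cols r Y|) :=
  (Gmx (R:=R) r M X)^T *m Omega r M pi *m Gmx (R:=R) r M Y.

Arguments Fmx {R d} r M pi X Y.
Definition Qmx (R : comUnitRingType) d (r : 'I_d -> nat) (M : {set 'I_d}) (pi : lev r -> R)
    (I H Rc : {set {set 'I_d}}) : 'M[R]_(#|cols r I|, #|cols r H|) :=
  Fmx r M pi I H - Fmx r M pi I Rc *m invmx (Fmx r M pi Rc Rc) *m Fmx r M pi Rc H.

Arguments Qmx {R d} r M pi I H Rc.
Definition marg (R : nzRingType) d (r : 'I_d -> nat) (M : {set 'I_d}) (pi : lev r -> R)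
    (j : 'I_d) (l : 'I_(r j).+1) : R :=
  \sum_(x in cells r M | x j == l) pi x.

Arguments marg {R d} r M pi j l.
Definition completely_independent (R : nzRingType) d (r : 'I_d -> nat)
    (M : {set 'I_d}) (pi : lev r -> R) : Prop :=
  forall x, x \in cells r M -> pi x = \prod_(j in M) marg r M pi j (x j).

Arguments completely_independent {R d} r M pi.
Definition Pset d (M : {set 'I_d}) : {set {set 'I_d}} :=
  [set t : {set 'I_d} | (t != set0) && (t \subset M)].

Definition Vset d K (N : 'I_K -> {set 'I_d}) : {set {set 'I_d}} :=
  [set t : {set 'I_d} | (t != set0) && [exists k, t \subset N k]].

Definition Aset d (M a b : {set 'I_d}) : {set {set 'I_d}} :=
  [set t : {set 'I_d} | [&& t \subset M, t :&: a != set0 & t :&: b != set0]].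

Definition vcols (R : Type) d (r : 'I_d -> nat) m (H : {set {set 'I_d}})
    (Q : 'M[R]_(m, #|cols r H|)) (v : {set 'I_d}) : {set 'I_#|cols r H|} :=
  [set k | supp (enum_val k) == v].

Arguments vcols {R d r m H} Q v.
Definition vblock (R : Type) d (r : 'I_d -> nat) m (H : {set {set 'I_d}})
    (Q : 'M[R]_(m, #|cols r H|)) (v : {set 'I_d}) : 'M[R]_(m, #|vcols Q v|) :=
  colsub (fun k : 'I_#|vcols Q v| => enum_val k) Q.

Arguments vblock {R d r m H} Q v.

From HB Require Import structures.
From mathcomp Require Import all_boot all_order all_algebra.
From mathcomp Require Import ring.
Set Implicit Arguments. Unset Strict Implicit. Unset Printing Implicit Defensive.
Import Order.TTheory GRing.Theory Num.Theory.
Local Open Scope ring_scope.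

(* A vector y indexed by the columns of G_H is read as the function G_H y on the
   cells.  Since F_XY z is the vector of covariances cov(1_c, G_Y z) for the
   columns c of X, Q_{IH|R} y = 0 whenever G_H y differs from some G_R z by a
   function uncorrelated with every indicator 1_c, supp c in V.  Under complete
   independence, a function f(X_l) with mean zero times a function not involving
   X_l is uncorrelated with every function not involving X_l.
   (i) For supp c = v not in A, write 1_c = prod_{l in v} (e_l + p_l) with e_l
   centred and expand: products of e_l over S not in V are uncorrelated with the
   V-indicators (pick l in S outside supp c'), and those over S in V expand into
   indicators of subsets of S, which lie in V minus I because A is closed upwards.
   (ii) If j in v is not binary and lies in no element of V, two columns c1, c2
   of the block v differing only at j give the kernel vector
   p_j(c2_j) 1_{c1} - p_j(c1_j) 1_{c2}, a centred function of X_j times a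
   function of the other variables of v.
   F_RR is invertible because, for pi > 0, a zero variance forces G_R z to be
   constant, and the indicators of nonempty patterns are independent modulo
   constants. *)

Section LevelVectors.
Variables (d : nat) (r : 'I_d -> nat).
Implicit Types (x c : lev r) (l : 'I_d) (M S T : {set 'I_d}).

Definition upd x l (m : 'I_(r l).+1) : lev r :=
  finfun (dfwith (x : forall j, 'I_(r j).+1) m).
Arguments upd x l m : clear implicits.

Lemma upd_same x l m : upd x l m l = m.
Proof. by rewrite ffunE dfwith_in. Qed.

Lemma upd_other x l m i : i != l -> upd x l m i = x i.
Proof. by move=> il; rewrite ffunE dfwith_out // eq_sym. Qed.

Lemma upd_upd x l m m' : upd (upd x l m) l m' = upd x l m'.
Proof.
apply/ffunP=> i; have [-> | il] := eqVneq i l; first by rewrite !upd_same.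
by rewrite !upd_other.
Qed.

Lemma upd_id x l : upd x l (x l) = x.
Proof.
apply/ffunP=> i; have [-> | il] := eqVneq i l; first by rewrite upd_same.
by rewrite upd_other.
Qed.

Lemma upd_cells M x l m : l \in M -> (upd x l m \in cells r M) = (x \in cells r M).
Proof.
move=> lM; rewrite !inE; apply/subsetP/subsetP => sub i; rewrite inE => xi;
  have [-> // | il] := eqVneq i l; apply: sub; rewrite inE.
  by rewrite upd_other.
by rewrite -(upd_other x m il).
Qed.

Lemma sum_slice_upd (R : nzRingType) M l (m m' : 'I_(r l).+1) (F : lev r -> R) :
  l \in M ->
  \sum_(x in cells r M | x l == m) F (upd x l m') =
  \sum_(y in cells r M | y l == m') F y.
Proof.
move=> lM; rewrite [RHS](reindex_onto (fun x => upd x l m') (fun x => upd x l m)) /=; last first.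
  by move=> y /andP[_ /eqP <-]; rewrite upd_upd upd_id.
apply: eq_bigl => x; rewrite upd_cells // upd_same eqxx andbT upd_upd.
congr (_ && _); apply/eqP/eqP => [<- | <-]; [exact: upd_id | exact: upd_same].
Qed.

Definition ignores (R : Type) l (h : lev r -> R) := forall x m, h (upd x l m) = h x.

Lemma prod_ignores (R : nzRingType) S l (F : forall i, 'I_(r i).+1 -> R) :
  ignores l (fun x => \prod_(i in S | i != l) F i (x i)).
Proof. by move=> x m; apply: eq_bigr => i /andP[_ il]; rewrite upd_other. Qed.

Definition ind (R : nzRingType) c x : R := \prod_(j in supp c) (x j == c j)%:R.
Arguments ind {R} c x.

Lemma ind_ignores (R : nzRingType) c l : l \notin supp c -> ignores l (ind (R := R) c).
Proof.
move=> lc x m; apply: eq_bigr => i ic; rewrite upd_other //.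
by apply: contraNneq lc => <-.
Qed.

Lemma ind_self (R : nzRingType) c : ind (R := R) c c = 1.
Proof. by apply: big1 => j _; rewrite eqxx. Qed.

Definition restr c T : lev r := [ffun i => if i \in T then c i else ord0].

Lemma supp_restr c T : supp (restr c T) = T :&: supp c.
Proof. by apply/setP => i; rewrite !inE ffunE; case: (i \in T). Qed.

Lemma restr_supp c : restr c (supp c) = c.
Proof.
apply/ffunP => i; rewrite ffunE inE; case: eqP => // ci.
by apply: val_inj; rewrite /= ci.
Qed.

Lemma ind_restr (R : nzRingType) c x T :
  T \subset supp c -> ind (R := R) (restr c T) x = \prod_(i in T) (x i == c i)%:R.
Proof.
move=> Tc; rewrite /ind supp_restr (setIidPl Tc).
by apply: eq_bigr => i iT; rewrite ffunE iT.
Qed.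

Lemma ind_neq0 (R : comNzRingType) c x : ind (R := R) c x != 0 -> c = restr x (supp c).
Proof.
move=> nz; apply/ffunP => i; rewrite ffunE; case: ifPn => [ic | ].
  apply/eqP; apply: contraNT nz ; rewrite eq_sym => ne.
  by rewrite /ind (bigD1 i) //= (negbTE ne) mul0r.
by rewrite inE negbK => /eqP ci; apply: val_inj.
Qed.

End LevelVectors.

Arguments ind {d r R} c x.
Arguments upd {d r} x l m.

Section InteractionSets.
Variables (d K : nat) (N : 'I_K -> {set 'I_d}).
Implicit Types (M a b s t : {set 'I_d}).

Lemma Vset_Pset M : (forall k, N k \proper M) -> Vset N \subset Pset M.
Proof.
move=> NM; apply/subsetP => t; rewrite !inE => /andP[-> /existsP[k tk]] /=.
exact: subset_trans tk (proper_sub (NM k)).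
Qed.

Lemma Vset_down s t : t \in Vset N -> s \subset t -> s != set0 -> s \in Vset N.
Proof.
rewrite !inE => /andP[_ /existsP[k tk]] st ->.
by apply/existsP; exists k; exact: subset_trans st tk.
Qed.

Lemma Aset_up M a b s t :
  s \subset t -> t \subset M -> s \in Aset M a b -> t \in Aset M a b.
Proof.
move=> st tM; rewrite !inE tM => /and3P[_ sa sb] /=.
by apply/andP; split; [apply: contraNneq sa | apply: contraNneq sb];
  move=> t0; rewrite -subset0 -t0 setSI.
Qed.

End InteractionSets.

Section Moments.
Variables (R : comNzRingType) (d : nat) (r : 'I_d -> nat) (M : {set 'I_d}).
Variable pi : lev r -> R.
Implicit Types (f g h u v : lev r -> R) (a b : R).

Definition Ex f := \sum_(x in cells r M) pi x * f x.
Definition cov f g := Ex (fun x => f x * g x) - Ex f * Ex g.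

Lemma eq_Ex f g : {in cells r M, f =1 g} -> Ex f = Ex g.
Proof. by move=> fg; apply: eq_bigr => x xc; rewrite fg. Qed.

Lemma Ex_lin a b f g : Ex (fun x => a * f x + b * g x) = a * Ex f + b * Ex g.
Proof. by rewrite /Ex !big_distrr -big_split /=; apply: eq_bigr => x _; ring. Qed.

Lemma Ex_indicator l (m : 'I_(r l).+1) : Ex (fun x => (x l == m)%:R) = marg r M pi l m.
Proof.
rewrite /Ex /marg [RHS]big_mkcondr; apply: eq_bigr => x _.
by case: eqP; rewrite ?mulr1 ?mulr0.
Qed.

Lemma covC f g : cov f g = cov g f.
Proof. by rewrite /cov mulrC; congr (_ - _); apply: eq_Ex => x _; rewrite mulrC. Qed.

Lemma eq_cov f u v : {in cells r M, u =1 v} -> cov f u = cov f v.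
Proof.
by move=> uv; rewrite /cov (eq_Ex uv) (eq_Ex (g := fun x => f x * v x)) // => x /uv ->.
Qed.

Lemma covr_lin f a b u v :
  cov f (fun x => a * u x + b * v x) = a * cov f u + b * cov f v.
Proof.
rewrite /cov (eq_Ex (g := fun x => a * (f x * u x) + b * (f x * v x))).
  by rewrite !Ex_lin; ring.
by move=> x _; ring.
Qed.

Lemma covl_sum (J : finType) (z : J -> R) (F : J -> lev r -> R) g :
  cov (fun x => \sum_k z k * F k x) g = \sum_k z k * cov (F k) g.
Proof.
rewrite /cov /Ex; under [RHS]eq_bigr do rewrite mulrBr.
rewrite sumrB; congr (_ - _).
  under eq_bigr do rewrite big_distrl big_distrr /=.
  rewrite exchange_big /=; apply: eq_bigr => k _; rewrite big_distrr /=.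
  by apply: eq_bigr => x _; ring.
under [RHS]eq_bigr do rewrite mulrA.
rewrite -big_distrl /=; congr (_ * _).
under eq_bigr do rewrite big_distrr /=.
rewrite exchange_big /=; apply: eq_bigr => k _; rewrite big_distrr /=.
by apply: eq_bigr => x _; ring.
Qed.

Hypothesis pi_sum1 : \sum_(x in cells r M) pi x = 1.

Lemma Ex_cst a : Ex (fun=> a) = a.
Proof. by rewrite /Ex -big_distrl /= pi_sum1 mul1r. Qed.

Lemma covr_cst f a : cov f (fun=> a) = 0.
Proof.
rewrite /cov Ex_cst (eq_Ex (g := fun x => a * f x + 0 * f x)); last by move=> x _; ring.
rewrite Ex_lin; ring.
Qed.

Lemma Ex_centered_indicator l (m : 'I_(r l).+1) :
  Ex (fun x => (x l == m)%:R - marg r M pi l m) = 0.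
Proof.
rewrite (eq_Ex (g := fun x => 1 * (x l == m)%:R + (- marg r M pi l m) * 1)).
  by rewrite Ex_lin Ex_indicator Ex_cst; ring.
by move=> x _; ring.
Qed.

Hypothesis pi_indep : completely_independent r M pi.
Variables (l : 'I_d) (lM : l \in M).
Implicit Types (m : 'I_(r l).+1).

Lemma pi_upd x m : x \in cells r M ->
  pi (upd x l m) * marg r M pi l (x l) = pi x * marg r M pi l m.
Proof.
move=> xc; rewrite pi_indep ?upd_cells // pi_indep // !(bigD1 l lM) /= upd_same.
under eq_bigr => i /andP[_ il] do rewrite upd_other //.
ring.
Qed.

Lemma Ex_slice h m : ignores l h ->
  \sum_(x in cells r M | x l == m) pi x * h x = marg r M pi l m * Ex h.
Proof.
move=> hl; pose A m := \sum_(x in cells r M | x l == m) pi x * h x.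
have A_marg m1 m2 : A m1 * marg r M pi l m2 = A m2 * marg r M pi l m1.
  rewrite /A big_distrl /= -(sum_slice_upd m1 m2 _ lM) big_distrl /=.
  apply: eq_bigr => x /andP[xc /eqP xl]; rewrite hl -xl mulrAC -pi_upd //; ring.
have sum_marg : \sum_m2 marg r M pi l m2 = 1.
  by rewrite -pi_sum1 (partition_big (fun x : lev r => x l) predT).
rewrite -[LHS]mulr1 -sum_marg big_distrr /=.
under eq_bigr do rewrite A_marg.
by rewrite -big_distrl /= mulrC -(partition_big (fun x : lev r => x l) predT).
Qed.

Lemma Ex_mul_indep h (phi : 'I_(r l).+1 -> R) : ignores l h ->
  Ex (fun x => h x * phi (x l)) = Ex h * Ex (fun x => phi (x l)).
Proof.
move=> hl.
have Ex_by_level g : Ex (fun x => g x * phi (x l)) =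
    \sum_m phi m * \sum_(x in cells r M | x l == m) pi x * g x.
  rewrite /Ex (partition_big (fun x : lev r => x l) predT) //=.
  apply: eq_bigr => m _; rewrite big_distrr.
  by apply: eq_bigr => x /andP[_ /eqP ->] /=; ring.
rewrite Ex_by_level (eq_Ex (f := fun x => phi (x l)) (g := fun x => (fun=> 1) x * phi (x l)))
  ?Ex_by_level; last by move=> x _ /=; rewrite mul1r.
rewrite big_distrr; apply: eq_bigr => m _.
by rewrite /= !Ex_slice // Ex_cst; ring.
Qed.

Lemma cov_centered_factor f h (psi : 'I_(r l).+1 -> R) :
  ignores l f -> ignores l h -> Ex (fun x => psi (x l)) = 0 ->
  cov f (fun x => h x * psi (x l)) = 0.
Proof.
move=> fl hl psi0; rewrite /cov.
rewrite (eq_Ex (g := fun x => (f x * h x) * psi (x l))); last by move=> x _; ring.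
rewrite !Ex_mul_indep ?psi0 ?mulr0 ?subrr // => x m.
by rewrite fl hl.
Qed.

End Moments.

Section CovarianceMatrices.
Variables (R : comNzRingType) (d : nat) (r : 'I_d -> nat) (M : {set 'I_d}).
Variable pi : lev r -> R.
Implicit Types (X Y : {set {set 'I_d}}) (f : lev r -> R).

Definition gfun X (z : 'cV[R]_#|cols r X|) (x : lev r) : R :=
  \sum_k ind (enum_val k) x * z k 0.

Lemma mulmx_Gmx X z : Gmx r M X *m z = \col_s gfun z (enum_val s).
Proof. by apply/matrixP => s i; rewrite !mxE ord1; apply: eq_bigr => k _; rewrite mxE. Qed.

Lemma mulmx_Omega f :
  Omega r M pi *m \col_s f (enum_val s) =
  \col_s (pi (enum_val s) * (f (enum_val s) - Ex M pi f)).
Proof.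
apply/matrixP => s i; rewrite !mxE.
under eq_bigr do rewrite !mxE mulrBl.
rewrite sumrB (bigD1 s) //= big1 => [|t /negbTE ts]; last by rewrite eq_sym ts mul0r mul0r.
rewrite eqxx /Ex (big_enum_val (fun x => pi x * f x)) /= addr0 mul1r mulrBr big_distrr.
by congr (_ - _); apply: eq_bigr => t _ /=; rewrite mulrA.
Qed.

Lemma mulmx_Fmx X Y z :
  Fmx r M pi X Y *m z = \col_k cov M pi (ind (enum_val k)) (gfun z).
Proof.
rewrite /Fmx -!mulmxA mulmx_Gmx mulmx_Omega; apply/matrixP => k i; rewrite !mxE.
rewrite /cov /Ex !(big_enum_val (fun x => pi x * _)) big_distrl /= -sumrB.
by apply: eq_bigr => s _; rewrite !mxE /ind; ring.
Qed.

Lemma gfun_delta X (k : 'I_#|cols r X|) x : gfun (delta_mx k 0) x = ind (enum_val k) x.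
Proof.
rewrite /gfun (bigD1 k) //= mxE !eqxx mulr1 big1 ?addr0 // => k' k'k.
by rewrite mxE (negbTE k'k) mulr0.
Qed.

Lemma gfun_lin X a b (z z' : 'cV[R]_#|cols r X|) x :
  gfun (a *: z + b *: z') x = a * gfun z x + b * gfun z' x.
Proof.
rewrite /gfun !big_distrr -big_split /=; apply: eq_bigr => k _; rewrite !mxE; ring.
Qed.

End CovarianceMatrices.

Section SpanModV.
Variables (R : comNzRingType) (d : nat) (r : 'I_d -> nat) (M : {set 'I_d}).
Variables (pi : lev r -> R) (K : nat) (N : 'I_K -> {set 'I_d}) (Rc : {set {set 'I_d}}).
Hypothesis pi_sum1 : \sum_(x in cells r M) pi x = 1.
Implicit Types (u v w : lev r -> R) (a b : R).

Definition span_modV u := exists z : 'cV[R]_#|cols r Rc|,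
  forall c, supp c \in Vset N -> cov M pi (ind c) u = cov M pi (ind c) (gfun z).

Lemma eq_span_modV u v : {in cells r M, u =1 v} -> span_modV u -> span_modV v.
Proof. by move=> uv [z hz]; exists z => c cV; rewrite -(eq_cov _ _ uv) hz. Qed.

Lemma span_modV_lin a b u v :
  span_modV u -> span_modV v -> span_modV (fun x => a * u x + b * v x).
Proof.
move=> [z hz] [z' hz']; exists (a *: z + b *: z') => c cV.
by rewrite covr_lin hz // hz' // -covr_lin; apply: eq_cov => x _; rewrite gfun_lin.
Qed.

Lemma span_modV_uncorrelated w :
  (forall c, supp c \in Vset N -> cov M pi (ind c) w = 0) -> span_modV w.
Proof.
move=> w0; exists 0 => c cV; rewrite w0 // (eq_cov _ _ (v := fun=> 0)) ?covr_cst //.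
by move=> x _; rewrite /gfun big1 // => k _; rewrite mxE mulr0.
Qed.

Lemma span_modV_cst a : span_modV (fun=> a).
Proof. by apply: span_modV_uncorrelated => c _; rewrite covr_cst. Qed.

Lemma span_modV_ind c : c \in cols r Rc -> span_modV (ind c).
Proof.
move=> cRc; exists (delta_mx (enum_rank_in cRc c) 0) => c' _.
by apply: eq_cov => x _; rewrite gfun_delta enum_rankK_in.
Qed.

Lemma span_modV_mulr u a : span_modV u -> span_modV (fun x => u x * a).
Proof.
move=> su; apply: eq_span_modV (span_modV_lin a 0 su (span_modV_cst 0)) => x _.
by rewrite mulr0 addr0 mulrC.
Qed.

Lemma span_modV_sum (J : finType) (P : pred J) (F : J -> lev r -> R) :
  (forall j, P j -> span_modV (F j)) -> span_modV (fun x => \sum_(j | P j) F j x).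
Proof.
move=> sF; rewrite /index_enum; elim: (Finite.enum J) => [|j s IH].
  by apply: eq_span_modV (span_modV_cst 0) => x _; rewrite big_nil.
have [Pj | nPj] := boolP (P j).
  apply: eq_span_modV (span_modV_lin 1 1 (sF j Pj) IH) => x _.
  by rewrite big_cons Pj !mul1r.
by apply: eq_span_modV IH => x _; rewrite big_cons (negbTE nPj).
Qed.

End SpanModV.

Lemma Qmx_mul_eq0 (R : comUnitRingType) d (r : 'I_d -> nat) (M : {set 'I_d})
    (pi : lev r -> R) K (N : 'I_K -> {set 'I_d}) (I H Rc : {set {set 'I_d}})
    (y : 'cV[R]_#|cols r H|) :
  Fmx r M pi Rc Rc \in unitmx -> I :|: Rc \subset Vset N ->
  span_modV M pi N Rc (gfun y) -> Qmx r M pi I H Rc *m y = 0.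
Proof.
move=> Funit IRcV [z hz].
have FH_FRc (X : {set {set 'I_d}}) :
    X \subset I :|: Rc -> Fmx r M pi X H *m y = Fmx r M pi X Rc *m z.
  move=> XIRc; rewrite !mulmx_Fmx; apply/matrixP => k i; rewrite !mxE hz //.
  by apply: (subsetP IRcV); apply: (subsetP XIRc); move: (enum_valP k); rewrite inE.
rewrite /Qmx mulmxBl FH_FRc ?subsetUl // -[X in _ - X]mulmxA FH_FRc ?subsetUr //.
by rewrite -[X in _ - X]mulmxA mulKmx // subrr.
Qed.

Lemma prodrD_subsets (R : comNzRingType) (I : finType) (A : {set I}) (f g : I -> R) :
  \prod_(i in A) (f i + g i) =
  \sum_(S : {set I} | S \subset A) \prod_(i in S) f i * \prod_(i in A :\: S) g i.
Proof.
rewrite big_mkcond /=.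
rewrite (eq_bigr (fun i => (if i \in A then f i else 0) + (if i \in A then g i else 1)));
  last by move=> i _; case: ifP; rewrite ?addr0 ?add0r.
rewrite bigA_distr /= [RHS]big_mkcond /=; apply: eq_bigr => S _.
case: ifPn => [SA | /subsetPn[i iS iA]]; last by rewrite (bigD1 i) //= iS (negbTE iA) mul0r.
rewrite (bigID (mem S)) /=; congr (_ * _).
  by apply: eq_bigr => i iS; rewrite iS (subsetP SA).
rewrite [LHS]big_mkcond [RHS]big_mkcond; apply: eq_bigr => i _; rewrite !inE.
by case: (i \in S); case: (i \in A).
Qed.

Section Decomposition.
Variables (R : comNzRingType) (d : nat) (r : 'I_d -> nat) (M : {set 'I_d}).
Variables (pi : lev r -> R) (K : nat) (N : 'I_K -> {set 'I_d}).
Hypothesis pi_sum1 : \sum_(x in cells r M) pi x = 1.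
Hypothesis pi_indep : completely_independent r M pi.

Implicit Types (S T : {set 'I_d}).

Let centered (c : lev r) (l : 'I_d) (x : lev r) : R := (x l == c l)%:R - marg r M pi l (c l).

Lemma cov_ind_prod_centered (c c' : lev r) S :
  S \subset M -> S != set0 -> S \notin Vset N -> supp c' \in Vset N ->
  cov M pi (ind c') (fun x => \prod_(l in S) centered c l x) = 0.
Proof.
move=> SM S0 SV c'V.
have [l lS lc'] : exists2 l, l \in S & l \notin supp c'.
  apply/exists_inP; apply: contraNT SV => /exists_inPn Sc'.
  apply: Vset_down c'V _ S0; apply/subsetP => l lS; move: (Sc' l lS); by rewrite negbK.
rewrite (eq_cov _ _ (v := fun x => (\prod_(i in S | i != l) centered c i x) * centered c l x)).
  apply: (cov_centered_factor pi_sum1 pi_indep (subsetP SM l lS) (ind_ignores _ lc')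
    (psi := fun m => (m == c l)%:R - marg r M pi l (c l))).
    exact: (prod_ignores S (fun i m => (m == c i)%:R - marg r M pi i (c i))).
  exact: Ex_centered_indicator.
by move=> x _; rewrite (bigD1 l) //= mulrC.
Qed.

Lemma span_modV_prod_centered (Rc : {set {set 'I_d}}) (c : lev r) S :
  S \subset supp c -> (forall T, T \subset S -> T != set0 -> T \in Rc) ->
  span_modV M pi N Rc (fun x => \prod_(l in S) centered c l x).
Proof.
move=> Sc TRc; apply: (eq_span_modV (u := fun x => \sum_(T : {set 'I_d} | T \subset S)
   \prod_(l in T) (x l == c l)%:R * \prod_(l in S :\: T) (- marg r M pi l (c l)))).
  by move=> x _; rewrite -prodrD_subsets.
apply: (span_modV_sum pi_sum1) => T TS; apply: (span_modV_mulr pi_sum1).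
have [-> | T0] := eqVneq T set0.
  by apply: eq_span_modV (span_modV_cst _ _ pi_sum1 1) => x _; rewrite big_set0.
have Tc : T \subset supp c := subset_trans TS Sc.
apply: eq_span_modV (span_modV_ind M pi N (c := restr c T) _) => [x _|].
  by rewrite ind_restr.
by rewrite inE supp_restr (setIidPl Tc) TRc.
Qed.

Lemma span_modV_ind_notA (a b : {set 'I_d}) (I : {set {set 'I_d}}) (c : lev r) :
  I \subset Aset M a b -> supp c \subset M -> supp c \notin Aset M a b ->
  span_modV M pi N (Vset N :\: I) (ind c).
Proof.
move=> IA cM cA.
apply: (eq_span_modV (u := fun x => \sum_(S : {set 'I_d} | S \subset supp c)
   \prod_(l in S) centered c l x * \prod_(l in supp c :\: S) marg r M pi l (c l))).
  by move=> x _; rewrite -prodrD_subsets; apply: eq_bigr => l _; rewrite subrK.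
apply: (span_modV_sum pi_sum1) => S Sc; apply: (span_modV_mulr pi_sum1).
have SM : S \subset M := subset_trans Sc cM.
have [SV | SV] := boolP ((S \in Vset N) || (S == set0)); last first.
  rewrite negb_or in SV; case/andP: SV => SV S0.
  by apply: (span_modV_uncorrelated _ pi_sum1) => c' c'V; apply: cov_ind_prod_centered.
apply: span_modV_prod_centered => // T TS T0; rewrite in_setD.
apply/andP; split.
  apply: contra cA => TI; apply: Aset_up (subset_trans TS Sc) cM _; exact: (subsetP IA).
case/orP: SV => [SV | /eqP S0]; first exact: Vset_down SV TS T0.
by move: T0; rewrite -subset0 -S0 TS.
Qed.

Lemma cov_ind_swap_level (c1 c2 c' : lev r) j :
  j \in M -> j \in supp c1 -> supp c1 = supp c2 -> (forall i, i != j -> c1 i = c2 i) ->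
  j \notin supp c' ->
  cov M pi (ind c')
    (fun x => marg r M pi j (c2 j) * ind c1 x - marg r M pi j (c1 j) * ind c2 x) = 0.
Proof.
move=> jM jc1 c12 e12 jc'.
pose h x := \prod_(i in supp c1 | i != j) ((x i == c1 i)%:R : R).
pose psi (m : 'I_(r j).+1) := marg r M pi j (c2 j) * (m == c1 j)%:R -
  marg r M pi j (c1 j) * (m == c2 j)%:R.
rewrite (eq_cov _ _ (v := fun x => h x * psi (x j))).
  apply: cov_centered_factor (ind_ignores _ jc') _ _ => //.
    exact: (prod_ignores (supp c1) (fun i (m : 'I_(r i).+1) => (m == c1 i)%:R)).
  rewrite (eq_Ex pi (g := fun x => marg r M pi j (c2 j) * (x j == c1 j)%:R +
     (- marg r M pi j (c1 j)) * (x j == c2 j)%:R)); last by move=> x _; rewrite /psi; ring.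
  by rewrite Ex_lin !Ex_indicator; ring.
move=> x _; rewrite /ind -c12 /h /psi !(bigD1 j jc1) /=.
under [in X in _ - _ * (_ * X)]eq_bigr => i /andP[_ ij] do rewrite -e12 //.
ring.
Qed.

End Decomposition.

Lemma gfun_const_eq0 (R : comNzRingType) d (r : 'I_d -> nat) (M : {set 'I_d})
    (X : {set {set 'I_d}}) (z : 'cV[R]_#|cols r X|) (m : R) :
  X \subset Pset M -> {in cells r M, forall x, gfun z x = m} -> z = 0.
Proof.
move=> XP zm.
have colP (k : 'I_#|cols r X|) : supp (enum_val k) \in Pset M.
  by apply: (subsetP XP); move: (enum_valP k); rewrite inE.
have ind_supp (k : 'I_#|cols r X|) x :
    ind (enum_val k) x != 0 :> R -> supp (enum_val k) \subset supp x.
  by move/ind_neq0 => e; apply/subsetP => i; rewrite e supp_restr => /setIP[].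
have m0 : m = 0.
  pose x0 : lev r := [ffun i => ord0].
  have supp_x0 : supp x0 = set0 by apply/setP => i; rewrite !inE ffunE.
  rewrite -(zm x0) ?inE ?supp_x0 ?sub0set //; apply: big1 => k _.
  have [-> | /ind_supp] := eqVneq (ind (enum_val k) x0 : R) 0; first by rewrite mul0r.
  by rewrite supp_x0 subset0 => /eqP sk0; move: (colP k); rewrite inE sk0 eqxx.
suff IH n k : (#|supp (enum_val k)| <= n)%N -> z k 0 = 0.
  by apply/matrixP => k i; rewrite ord1 mxE (IH _ k (leqnn _)).
elim: n k => [|n IHn] k.
  by rewrite leqn0 cards_eq0 => /eqP sk0; move: (colP k); rewrite inE sk0 eqxx.
rewrite leq_eqVlt ltnS => /orP[/eqP skn | /IHn //].
set c := enum_val k.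
have cc : c \in cells r M by rewrite inE; move: (colP k); rewrite inE => /andP[].
have := zm c cc; rewrite m0 /gfun (bigD1 k) //= ind_self mul1r big1 ?addr0 // => k' k'k.
have [-> | nz] := eqVneq (ind (enum_val k') c : R) 0; first by rewrite mul0r.
have [/IHn -> | gt_n] := leqP #|supp (enum_val k')| n; first by rewrite mulr0.
have e : supp (enum_val k') = supp c.
  by apply/eqP; rewrite eqEcard ind_supp // skn.
by case/eqP: k'k; apply: enum_val_inj; rewrite (ind_neq0 nz) e restr_supp.
Qed.

Section Positivity.
Variables (R : realFieldType) (d : nat) (r : 'I_d -> nat) (M : {set 'I_d}).
Variable pi : lev r -> R.
Hypothesis pi_gt0 : forall x, x \in cells r M -> 0 < pi x.
Hypothesis pi_sum1 : \sum_(x in cells r M) pi x = 1.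

Lemma cov_self_eq0 f : cov M pi f f = 0 -> {in cells r M, forall x, f x = Ex M pi f}.
Proof.
move=> var0 x xc; set m := Ex M pi f.
have sq0 : \sum_(y in cells r M) pi y * (f y - m) ^+ 2 = 0.
  rewrite -[RHS]var0 /cov -/m (eq_bigr (fun y => pi y * (f y * f y) +
    (- (2%:R * m)) * (pi y * f y) + m ^+ 2 * pi y)); last by move=> y _; ring.
  by rewrite !big_split /= -!big_distrr /= pi_sum1 -/(Ex M pi f) -/m /Ex; ring.
have := psumr_eq0P (fun y yc => mulr_ge0 (ltW (pi_gt0 yc)) (sqr_ge0 (f y - m))) sq0 xc.
by move/eqP; rewrite mulf_eq0 (gt_eqF (pi_gt0 xc)) /= sqrf_eq0 subr_eq0 => /eqP.
Qed.

Lemma Fmx_unit (X : {set {set 'I_d}}) : X \subset Pset M -> Fmx r M pi X X \in unitmx.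
Proof.
move=> XP; rewrite -row_free_unit; apply/inj_row_free => u uF0.
have var0 : cov M pi (gfun u^T) (gfun u^T) = 0.
  have : (u *m (Fmx r M pi X X *m u^T)) 0 0 = 0 by rewrite mulmxA uF0 mul0mx mxE.
  rewrite mulmx_Fmx mxE; under eq_bigr do rewrite mxE.
  move=> <-; rewrite -covl_sum [RHS]covC; apply: eq_cov => x _.
  by rewrite /gfun; apply: eq_bigr => k _; rewrite mxE mulrC.
apply: trmx_inj; rewrite trmx0; exact: gfun_const_eq0 XP (cov_self_eq0 var0).
Qed.

Lemma marg_gt0 l x : x \in cells r M -> 0 < marg r M pi l (x l).
Proof.
move=> xc; rewrite /marg (bigD1 x) /=; last by rewrite xc eqxx.
apply: ltr_wpDr (pi_gt0 xc).
by apply: sumr_ge0 => y /andP[/andP[yc _] _]; exact: ltW (pi_gt0 yc).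
Qed.

End Positivity.

Lemma mxrank_lt_of_mulmx_eq0 (R : fieldType) m n (A : 'M[R]_(m, n)) (y : 'cV[R]_n) :
  A *m y = 0 -> y != 0 -> (\rank A < n)%N.
Proof.
move=> Ay y0; rewrite ltn_neqAle rank_leq_col andbT; apply: contraNneq y0 => rn.
have rf : row_free A^T by rewrite /row_free mxrank_tr rn.
have : y^T *m A^T == 0 by rewrite -trmx_mul Ay trmx0.
by rewrite mulmx_free_eq0 // => /eqP yt; rewrite -[y]trmxK yt trmx0.
Qed.

Lemma rank_vblock_lt (R : fieldType) d (r : 'I_d -> nat) m (H : {set {set 'I_d}})
    (Q : 'M[R]_(m, #|cols r H|)) v (y : 'cV[R]_#|cols r H|) :
  Q *m y = 0 -> (forall k, k \notin vcols Q v -> y k 0 = 0) -> y != 0 ->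
  (\rank (vblock Q v) < #|vcols Q v|)%N.
Proof.
move=> Qy yout /matrix0Pn[k [i yk]]; rewrite ord1 in yk.
have kv : k \in vcols Q v by apply: contraNT yk => /yout ->; rewrite eqxx.
apply: (mxrank_lt_of_mulmx_eq0 (y := \col_k' y (enum_val k') 0)).
  apply/matrixP => i' j; rewrite ord1 [RHS]mxE.
  transitivity ((Q *m y) i' 0); last by rewrite Qy mxE.
  rewrite !mxE [RHS](bigID (mem (vcols Q v))) /= [X in _ = _ + X]big1 ?addr0.
    rewrite [RHS](big_enum_val (fun k => Q i' k * y k 0)).
    by apply: eq_bigr => k' _; rewrite !mxE.
  by move=> k' /yout ->; rewrite mulr0.
apply/eqP => /matrixP /(_ (enum_rank_in kv k) 0); rewrite !mxE enum_rankK_in //.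
exact/eqP.
Qed.

Lemma cols_differing_at d (r : 'I_d -> nat) (v : {set 'I_d}) j :
  (forall i, i \in v -> (0 < r i)%N) -> j \in v -> (2 <= r j)%N ->
  exists c1 c2 : lev r,
    [/\ supp c1 = v, supp c2 = v, c1 j != c2 j & forall i, i != j -> c1 i = c2 i].
Proof.
move=> rv jv rj; pose c1 : lev r := [ffun i => if i \in v then inord 1 else ord0].
have c1j : nat_of_ord (c1 j) = 1%N by rewrite ffunE jv inordK // ltnS rv.
exists c1, (upd c1 j (inord 2)); split.
- apply/setP => i; rewrite !inE ffunE; case: ifP => iv //=.
  by rewrite inordK // ltnS rv.
- apply/setP => i; have [-> | ij] := eqVneq i j.
    by rewrite inE upd_same inordK ?ltnS // jv.
  by rewrite !inE upd_other // ffunE; case: ifP => iv //=; rewrite inordK // ltnS rv.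
- by rewrite upd_same -(inj_eq val_inj) /= c1j inordK ?ltnS.
- by move=> i ij; rewrite upd_other.
Qed.

Section ConditionalCovariance.
Variables (R : realFieldType) (d : nat) (r : 'I_d -> nat) (M : {set 'I_d}).
Variables (pi : lev r -> R) (K : nat) (N : 'I_K -> {set 'I_d}).
Variables (I H : {set {set 'I_d}}).
Hypothesis pi_gt0 : forall x, x \in cells r M -> 0 < pi x.
Hypothesis pi_sum1 : \sum_(x in cells r M) pi x = 1.
Hypothesis pi_indep : completely_independent r M pi.
Hypothesis N_proper : forall k, N k \proper M.
Hypothesis I_Vset : I \subset Vset N.

Let Rc := Vset N :\: I.
Let Q := Qmx r M pi I H Rc.

Let Rc_unit : Fmx r M pi Rc Rc \in unitmx.
Proof.
apply: (Fmx_unit pi_gt0 pi_sum1); apply: subset_trans (subsetDl _ _) (Vset_Pset N_proper).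
Qed.

Let IRc_Vset : I :|: Rc \subset Vset N.
Proof. by rewrite subUset I_Vset subsetDl. Qed.

Lemma Qmx_col_notA_eq0 (a b v : {set 'I_d}) i k :
  I \subset Aset M a b -> v \subset M -> v \notin Aset M a b -> k \in vcols Q v ->
  Q i k = 0.
Proof.
move=> IA vM vA; rewrite inE => /eqP kv.
have Qk0 : Q *m (delta_mx k 0 : 'cV[R]_#|cols r H|) = 0.
  apply: Qmx_mul_eq0 Rc_unit IRc_Vset _.
  apply: (eq_span_modV (u := ind (enum_val k))) => [x _|]; first by rewrite gfun_delta.
  by apply: (span_modV_ind_notA N pi_sum1 pi_indep IA); rewrite kv.
by move/matrixP/(_ i 0): Qk0; rewrite -colE !mxE.
Qed.

Lemma Qmx_block_rank_lt v j :
  (forall i, i \in M -> (0 < r i)%N) -> v \in H -> v \subset M ->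
  j \in v -> (2 <= r j)%N -> (forall t, t \in Vset N -> j \notin t) ->
  (\rank (vblock Q v) < #|vcols Q v|)%N.
Proof.
move=> r_gt0 vH vM jv rj jV.
have [c1 [c2 [s1 s2 c12j c12]]] :=
  cols_differing_at (fun i iv => r_gt0 i (subsetP vM i iv)) jv rj.
have c1H : c1 \in cols r H by rewrite inE s1.
have c2H : c2 \in cols r H by rewrite inE s2.
set k1 := enum_rank_in c1H c1; set k2 := enum_rank_in c1H c2.
have ek1 : enum_val k1 = c1 by rewrite enum_rankK_in.
have ek2 : enum_val k2 = c2 by rewrite enum_rankK_in.
have k12 : k1 != k2 by apply: contra c12j => /eqP k12; rewrite -ek1 -ek2 k12.
set p1 := marg r M pi j (c1 j); set p2 := marg r M pi j (c2 j).
have p2_gt0 : 0 < p2 by apply: marg_gt0; rewrite // inE s2.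
apply: (rank_vblock_lt (y := p2 *: delta_mx k1 0 + (- p1) *: delta_mx k2 0)).
- apply: Qmx_mul_eq0 Rc_unit IRc_Vset _.
  apply: eq_span_modV (span_modV_uncorrelated _ pi_sum1 _) => [x _ | c' c'V].
    by rewrite gfun_lin !gfun_delta ek1 ek2.
  rewrite (eq_cov _ _ (v := fun x => p2 * ind c1 x - p1 * ind c2 x)) => [|x _]; last by ring.
  apply: cov_ind_swap_level => //; first exact: (subsetP vM).
  + by rewrite s1.
  + by rewrite s1 s2.
  + exact: jV.
- move=> k; rewrite inE => kv; rewrite !mxE.
  have [k1E | k1k] := eqVneq k k1; first by move: kv; rewrite k1E ek1 s1 eqxx.
  have [k2E | k2k] := eqVneq k k2; first by move: kv; rewrite k2E ek2 s2 eqxx.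
  by rewrite !mulr0 addr0.
- apply/eqP => /matrixP /(_ k1 0); rewrite !mxE eqxx (negbTE k12) mulr1 mulr0 addr0.
  by move/eqP; rewrite (gt_eqF p2_gt0).
Qed.

End ConditionalCovariance.

Unset Implicit Arguments.

Theorem lemma5 (R : realFieldType) (d : nat) (r : 'I_d -> nat) (M : {set 'I_d})
    (pi : lev r -> R) (K : nat) (N : 'I_K -> {set 'I_d}) (a b : {set 'I_d})
    (I H : {set {set 'I_d}}) :
  (forall j, j \in M -> (0 < r j)%N) ->
  (forall x, x \in cells r M -> 0 < pi x) ->
  \sum_(x in cells r M) pi x = 1 ->
  completely_independent r M pi ->
  (forall k, N k \proper M) ->
  a \subset M -> b \subset M -> [disjoint a & b] -> a != set0 -> b != set0 ->
  I \subset Vset N :&: Aset M a b ->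
  H \subset Pset M :\: Vset N ->
  (forall v, v \in H -> v \notin Aset M a b ->
     forall (i : 'I_#|cols r I|) (k : 'I_#|cols r H|),
       k \in vcols (Qmx r M pi I H (Vset N :\: I)) v ->
       Qmx r M pi I H (Vset N :\: I) i k = 0)
  /\
  (forall v, v \in H ->
     (exists2 j, j \in v & (2 <= r j)%N /\ (forall t, t \in Vset N -> j \notin t)) ->
     (\rank (vblock (Qmx r M pi I H (Vset N :\: I)) v)
        < #|vcols (Qmx r M pi I H (Vset N :\: I)) v|)%N).
Proof.
move=> r_gt0 pi_gt0 pi_sum1 pi_indep N_proper _ _ _ _ _.
rewrite subsetI => /andP[I_Vset I_Aset] H_P.
have H_M v : v \in H -> v \subset M.
  by move/(subsetP H_P); rewrite !inE => /and3P[_ _].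
split=> [v vH vA i k | v vH [j jv [rj jV]]].
  by apply: (Qmx_col_notA_eq0 pi_gt0 pi_sum1 pi_indep N_proper I_Vset i I_Aset (H_M v vH) vA).
exact: (Qmx_block_rank_lt pi_gt0 pi_sum1 pi_indep N_proper I_Vset r_gt0 vH (H_M v vH) jv rj jV).
Qed.
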